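(* For all $m\in\mathbb N$, all $\epsilon\in(0,1)$ and all $c\in(0,1/5)$, $$\mathbb E_{\theta^\circ}P_{\vartheta^m|Y}\Big(\|\vartheta^m-\theta^\circ\|^2> b_m+3\bar\sigma_m+\tfrac32 m\,\sigma_{(m)}+4r_m\Big)\le 2\exp(-m/36),$$ $$\mathbb E_{\theta^\circ}P_{\vartheta^m|Y}\Big(\|\vartheta^m-\theta^\circ\|^2< b_m+\bar\sigma_m-4c\,(m\,\sigma_{(m)}+r_m)\Big)\le 2\exp(-c^2m/2).$$
   Context: Let $\ell^2$ be the space of square-summable real sequences with norm $\|\cdot\|$. Fix a bounded real sequence $\lambda=(\lambda_j)_{j\ge1}$ with $\lambda_j\ne0$ for all $j$, a noise level $\epsilon\in(0,1)$ and a true parameter $\theta^\circ\in\ell^2$. The data $Y=(Y_j)_{j\ge1}$ satisfy $Y_j=\lambda_j\theta^\circ_j+\sqrt\epsilon\,\xi_j$ with $\xi_j$ i.i.d. $N(0,1)$; $\mathbb E_{\theta^\circ}$, $P_{\theta^\circ}$ denote expectation and probability under this law. Fix prior means $\eta=(\eta_j)_{j\ge1}$ with $\theta^\circ-\eta\in\ell^2$ and prior variances $\tau_j\in(0,\infty)$ (possibly depending on $\epsilon$). For $m\in\mathbb N$ the sieve prior $P_{\vartheta^m}$ is the law of $\vartheta^m=(\vartheta^m_j)_{j\ge1}$ with independent coordinates, $\vartheta^m_j\sim N(\eta_j,\tau_j)$ for $j\le m$ and $\vartheta^m_j=\eta_j$ a.s. for $j>m$, in the model $Y_j=\lambda_j\vartheta^m_j+\sqrt\epsilon\xi_j$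 with $\vartheta^m$ independent of $(\xi_j)$. Put $\sigma_j:=(\lambda_j^2\epsilon^{-1}+\tau_j^{-1})^{-1}$ and $\theta^Y_j:=\sigma_j(\tau_j^{-1}\eta_j+\lambda_j\epsilon^{-1}Y_j)$. The posterior $P_{\vartheta^m|Y}$ makes the coordinates independent with $\vartheta^m_j\sim N(\theta^Y_j,\sigma_j)$ for $j\le m$ and $\vartheta^m_j=\eta_j$ for $j>m$; the Bayes estimator is $\hat\theta^m:=\mathbb E[\vartheta^m|Y]$, i.e. $\hat\theta^m_j=\theta^Y_j$ for $j\le m$, $\hat\theta^m_j=\eta_j$ for $j>m$. Define $b_m:=\sum_{j>m}(\theta^\circ_j-\eta_j)^2$, $\bar\sigma_m:=\sum_{j=1}^m\sigma_j$, $\sigma_{(m)}:=\max_{1\le j\le m}\sigma_j$, $r_m:=\sum_{j=1}^m\sigma_j^2\tau_j^{-2}(\eta_j-\theta^\circ_j)^2$. *)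

From HB Require Import structures.
From mathcomp Require Import all_boot all_order all_algebra.
From mathcomp Require Import all_classical all_reals all_analysis.
Set Implicit Arguments. Unset Strict Implicit. Unset Printing Implicit Defensive.
Import Order.TTheory GRing.Theory Num.Theory.
Import numFieldNormedType.Exports.
Local Open Scope classical_set_scope.
Local Open Scope ring_scope.

(* Sequences are indexed by nat starting at 0: the paper's coordinate j >= 1
   is our coordinate j-1; "j <= m" becomes "j < m". *)
Section Defs.
Variable R : realType.

Definition upd (x : nat -> R) (k : nat) (t : R) : nat -> R :=
  fun j => if j == k then t else x j.

(* Iterated integral of f against the product of the Gaussian laws
   N(mu j, s j ^ 2), j < k, on the coordinates j < k of x
   (coordinates >= k of x are kept fixed).  s j is the standard deviation. *)
Fixpoint gauss_iter (k : nat) (mu s : nat -> R)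
    (f : (nat -> R) -> \bar R) (x : nat -> R) : \bar R :=
  match k with
  | 0 => f x
  | k'.+1 => (\int[normal_prob (mu k') (s k')]_t
                 gauss_iter k' mu s f (upd x k' t))%E
  end.

Definition post_var (lam tau : nat -> R) (eps : R) (j : nat) : R :=
  (lam j ^+ 2 / eps + (tau j)^-1)^-1.

Definition post_mean (lam tau eta : nat -> R) (eps : R) (Y : nat -> R)
    (j : nat) : R :=
  post_var lam tau eps j * ((tau j)^-1 * eta j + lam j * eps^-1 * Y j).

Definition sieve (m : nat) (eta x : nat -> R) : nat -> R :=
  fun j => if (j < m)%N then x j else eta j.

Definition sqdist (u v : nat -> R) : \bar R :=
  (\sum_(0 <= j <oo) (((u j - v j) ^+ 2)%:E))%E.

(* b_m = sum_{j > m} (theta_j - eta_j)^2  (paper indexing) *)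
Definition bias (m : nat) (theta eta : nat -> R) : \bar R :=
  (\sum_(m <= j <oo) (((theta j - eta j) ^+ 2)%:E))%E.

Definition sigma_bar (m : nat) (lam tau : nat -> R) (eps : R) : R :=
  \sum_(j < m) post_var lam tau eps j.

Definition sigma_max (m : nat) (lam tau : nat -> R) (eps : R) : R :=
  \big[Num.max/0]_(j < m) post_var lam tau eps j.

Definition r_m (m : nat) (lam tau eta theta : nat -> R) (eps : R) : R :=
  \sum_(j < m) (post_var lam tau eps j ^+ 2 * (tau j)^-2 *
                (eta j - theta j) ^+ 2).

(* E_{theta0} P_{vartheta^m | Y}(||vartheta^m - theta0||^2 \in A):
   Y_j ~ N(lam_j theta0_j, eps) independent (only j < m enter the posterior),
   and, given Y, vartheta^m_j ~ N(theta^Y_j, sigma_j) independent for j < m,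
   vartheta^m_j = eta_j for j >= m. *)
Definition exp_post_prob (m : nat) (lam tau eta theta : nat -> R) (eps : R)
    (A : set (\bar R)) : \bar R :=
  gauss_iter m (fun j => lam j * theta j) (fun _ => Num.sqrt eps)
    (fun Y => gauss_iter m (post_mean lam tau eta eps Y)
                (fun j => Num.sqrt (post_var lam tau eps j))
                (fun x => (\1_A (sqdist (sieve m eta x) theta))%:E)
                (fun _ => 0))
    (fun _ => 0).

End Defs.

From HB Require Import structures.
From mathcomp Require Import all_boot all_order all_algebra.
From mathcomp Require Import all_classical all_reals all_analysis measurable_realfun.
From mathcomp Require Import ring lra.
Import Order.TTheory GRing.Theory Num.Theory.
Import numFieldNormedType.Exports.
Set Implicit Arguments. Unset Strict Implicit. Unset Printing Implicit Defensive.
Local Open Scope classical_set_scope.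
Local Open Scope ring_scope.

(* Averaged over the data, the posterior draw has independent coordinates
   [vartheta_j - theta_j ~ N(a_j, v_j)], j < m, where a_j is the bias of the
   posterior mean and sigma_j <= v_j <= 2 sigma_j, while
   [||vartheta - theta||^2 = sum_(j < m) (vartheta_j - theta_j)^2 + b_m].
   Hence [E exp(l ||vartheta - theta||^2)] is an explicit product of Gaussian
   moments [(1 - 2 l v_j)^(-1/2) exp(l a_j^2 / (1 - 2 l v_j))].  Markov's
   inequality with [l = 1/(8 sigma_(m))] for the upper tail and
   [l = - c/(4 sigma_(m))] for the lower tail, together with elementary bounds
   on these moments, gives the tail bounds [exp(-m/16)] and [exp(-c^2 m/2)]. *)

Section normal_mgf_sqr.
Variable R : realType.
Implicit Types k c mu s t a b v e : R.

(* [E exp(k Z^2)] for [Z ~ N(a, v)] *)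
Definition sqr_normal_mgf k a v : R :=
  (Num.sqrt (1 - 2 * k * v))^-1 * expR (k * a ^+ 2 / (1 - 2 * k * v)).

Lemma integral_normal_prob mu s (f : R -> \bar R) :
  (forall x, 0 <= f x)%E -> measurable_fun setT f ->
  (\int[normal_prob mu s]_x f x =
   \int[lebesgue_measure]_x (f x * (normal_pdf mu s x)%:E))%E.
Proof.
move=> f0 mf.
have dom := normal_prob_dominates mu s.
rewrite -(Radon_Nikodym_SigmaFinite.change_of_variables dom f0 measurableT mf).
apply: ae_eq_integral => //.
- apply: emeasurable_funM => //.
  exact: measurable_int (Radon_Nikodym_SigmaFinite.f_integrable dom).
- apply: emeasurable_funM => //.
  by apply/measurable_EFinP; exact: measurable_normal_pdf.
- apply: ae_eqe_mul2l; apply: integral_ae_eq => //.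
  + exact: Radon_Nikodym_SigmaFinite.f_integrable dom.
  + by apply/measurable_EFinP; exact: measurable_normal_pdf.
  + by move=> E _ mE; rewrite -Radon_Nikodym_SigmaFinite.f_integral.
Qed.

Lemma measurable_expR_sqr k c :
  measurable_fun [set: R] (fun t => expR (k * (t - c) ^+ 2)).
Proof.
apply: measurableT_comp => //; apply: measurable_funM => //.
exact/measurable_funX/measurable_funB.
Qed.

Lemma complete_square k c mu s t : s != 0 -> 1 - 2 * k * s ^+ 2 != 0 ->
  let D := 1 - 2 * k * s ^+ 2 in
  k * (t - c) ^+ 2 - (t - mu) ^+ 2 / (s ^+ 2 *+ 2) =
  k * (mu - c) ^+ 2 / D - (t - (mu + (1 - D) * (mu - c) / D)) ^+ 2 * D / (s ^+ 2 *+ 2).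
Proof. by move=> s0 D0 D; rewrite /D; field; rewrite D0 s0. Qed.

Lemma expR_sqr_normal_pdf k c mu s t : s != 0 -> 0 < 1 - 2 * k * s ^+ 2 ->
  let D := 1 - 2 * k * s ^+ 2 in
  expR (k * (t - c) ^+ 2) * normal_pdf mu s t =
  (Num.sqrt D)^-1 * expR (k * (mu - c) ^+ 2 / D) *
  normal_pdf (mu + (1 - D) * (mu - c) / D) (s / Num.sqrt D) t.
Proof.
move=> s0 D0 D; set mu' := mu + (1 - D) * (mu - c) / D.
have sD0 : 0 < Num.sqrt D by rewrite sqrtr_gt0.
have s'0 : s / Num.sqrt D != 0 by rewrite mulf_neq0 // invr_eq0 gt_eqF.
have s'2 : (s / Num.sqrt D) ^+ 2 = s ^+ 2 / D by rewrite exprMn exprVn sqr_sqrtr // ltW.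
have P0 : 0 < s ^+ 2 * pi *+ 2 by rewrite pmulrn_lgt0 // mulr_gt0 ?pi_gt0 // exprn_even_gt0.
rewrite !normal_pdfE // /normal_peak /normal_fun s'2.
have -> : Num.sqrt (s ^+ 2 / D * pi *+ 2) = Num.sqrt (s ^+ 2 * pi *+ 2) / Num.sqrt D.
  have -> : s ^+ 2 / D * pi *+ 2 = s ^+ 2 * pi *+ 2 / D by rewrite mulrAC mulrnAl.
  by rewrite sqrtrM ?sqrtrV ?(ltW D0) ?(ltW P0).
have -> : - (t - mu') ^+ 2 / (s ^+ 2 / D *+ 2) =
          k * (t - c) ^+ 2 - (t - mu) ^+ 2 / (s ^+ 2 *+ 2) - k * (mu - c) ^+ 2 / D.
  have Dn0 : D != 0 by rewrite gt_eqF.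
  rewrite (complete_square _ _ _ s0 Dn0) -/D -/mu'; clearbody mu' D.
  by field; rewrite s0 Dn0.
rewrite mulNr !expRD !expRN.
have sP0 : Num.sqrt (s ^+ 2 * pi *+ 2) != 0 by rewrite lt0r_neq0 ?sqrtr_gt0.
by field; rewrite sP0 !(lt0r_neq0 (expR_gt0 _)) (lt0r_neq0 sD0).
Qed.

Lemma normal_mgf_sqr k c mu s : s != 0 -> 0 < 1 - 2 * k * s ^+ 2 ->
  (\int[normal_prob mu s]_t (expR (k * (t - c) ^+ 2))%:E =
   (sqr_normal_mgf k (mu - c) (s ^+ 2))%:E)%E.
Proof.
move=> s0 D0; rewrite integral_normal_prob; last 2 first.
- by move=> x; rewrite lee_fin expR_ge0.
- by apply/measurable_EFinP; exact: measurable_expR_sqr.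
under eq_integral do rewrite -EFinM (expR_sqr_normal_pdf _ _ _ s0 D0) EFinM.
rewrite integralZl //; last exact: integrable_normal_pdf.
by rewrite integral_normal_pdf mule1.
Qed.

Lemma sqr_normal_mgf_scale k b u v : 1 - 2 * k * v != 0 ->
  sqr_normal_mgf k (b * u) v =
  (Num.sqrt (1 - 2 * k * v))^-1 * expR (k * b ^+ 2 / (1 - 2 * k * v) * u ^+ 2).
Proof. by move=> D0; rewrite /sqr_normal_mgf exprMn; congr (_ * expR _); field. Qed.

Lemma mix_factorE k b v e : 1 - 2 * k * v != 0 ->
  (1 - 2 * k * v) * (1 - 2 * (k * b ^+ 2 / (1 - 2 * k * v)) * e) =
  1 - 2 * k * (v + b ^+ 2 * e).
Proof. by move=> D0; field. Qed.

Lemma mix_factor_gt0 k b v e : 0 < 1 - 2 * k * v -> 0 < 1 - 2 * k * (v + b ^+ 2 * e) ->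
  0 < 1 - 2 * (k * b ^+ 2 / (1 - 2 * k * v)) * e.
Proof.
by move=> D0; rewrite -(mix_factorE _ _ (lt0r_neq0 D0)) pmulr_rgt0.
Qed.

(* If [W ~ N(a, b^2 e)] and [Z ~ N(W, v)] given [W], then [E exp(k Z^2)],
   computed by integrating first in [Z] then in [W], is the mgf of [N(a, v + b^2 e)]. *)
Lemma sqr_normal_mgf_mix k a b v e : b != 0 ->
  0 < 1 - 2 * k * v -> 0 < 1 - 2 * k * (v + b ^+ 2 * e) ->
  (Num.sqrt (1 - 2 * k * v))^-1 *
    sqr_normal_mgf (k * b ^+ 2 / (1 - 2 * k * v)) (a / b) e =
  sqr_normal_mgf k a (v + b ^+ 2 * e).
Proof.
move=> b0 D0 V0.
rewrite /sqr_normal_mgf -(mix_factorE _ _ (lt0r_neq0 D0)).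
rewrite sqrtrM ?(ltW D0) // invfM mulrA; congr (_ * expR _).
field; have -> : 1 - 2 * k * v - 2 * (k * b ^+ 2) * e = 1 - 2 * k * (v + b ^+ 2 * e).
  by ring.
by rewrite b0 !lt0r_neq0.
Qed.

End normal_mgf_sqr.

(* No measurability is needed: a nonnegative integral is a supremum over simple minorants. *)
Lemma le_ge0_integral d (T : measurableType d) (R : realType)
    (mu : {measure set T -> \bar R}) (f g : T -> \bar R) :
  (forall x, 0 <= f x)%E -> (forall x, f x <= g x)%E ->
  (\int[mu]_x f x <= \int[mu]_x g x)%E.
Proof.
move=> f0 fg; have g0 x : (0 <= g x)%E by apply: le_trans (f0 x) (fg x).
rewrite !ge0_integralE // ?patch_setT //.
apply: ereal_sup_le => _ [h hf <-]; exists h => // x.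
exact: le_trans (hf x) (fg x).
Qed.

Section gauss_iter.
Variable R : realType.
Implicit Types (mu s : nat -> R) (f g : (nat -> R) -> \bar R).

Lemma gauss_iter_ge0 k mu s f x : (forall y, 0 <= f y)%E ->
  (0 <= gauss_iter k mu s f x)%E.
Proof.
move=> f0; elim: k x => [|k IH] x /=; first exact: f0.
by apply: integral_ge0 => t _; exact: IH.
Qed.

Lemma le_gauss_iter k mu s f g x : (forall y, 0 <= f y)%E ->
  (forall y, f y <= g y)%E -> (gauss_iter k mu s f x <= gauss_iter k mu s g x)%E.
Proof.
move=> f0 fg; elim: k x => [|k IH] x /=; first exact: fg.
by apply: le_ge0_integral => t; [exact: gauss_iter_ge0 | exact: IH].
Qed.

Lemma gauss_iter_prod k mu s (g : nat -> R -> R) (I : nat -> R) (h : (nat -> R) -> R) x :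
  (forall j t, 0 <= g j t) -> (forall j, measurable_fun setT (g j)) ->
  (forall j, (j < k)%N -> \int[normal_prob (mu j) (s j)]_t (g j t)%:E = (I j)%:E)%E ->
  (forall y j t, (j < k)%N -> h (upd y j t) = h y) -> (forall y, 0 <= h y) ->
  gauss_iter k mu s (fun y => (h y * \prod_(j < k) g j (y j))%:E) x =
  (h x * \prod_(j < k) I j)%:E.
Proof.
elim: k h x => [|k IH] h x g0 mg gI hupd h0 /=; first by rewrite !big_ord0.
have I0 j : (j < k.+1)%N -> 0 <= I j.
  by move=> jk; rewrite -lee_fin -(gI j jk) integral_ge0 // => t _; rewrite lee_fin.
under eq_integral => t _.
  rewrite (_ : (fun y => _) =
      (fun y => (h y * g k (y k) * \prod_(j < k) g j (y j))%:E)); last first.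
    by apply: funext => y; rewrite big_ord_recr /=; congr (_%:E); ring.
  rewrite IH //; last first.
  - by move=> y; rewrite mulr_ge0.
  - move=> y j u jk; rewrite hupd ?(ltn_trans jk) //.
    by rewrite /upd (gtn_eqF jk).
  - by move=> j jk; apply: gI; apply: ltn_trans jk _.
  rewrite hupd // /upd eqxx mulrAC EFinM.
  over.
rewrite /= ge0_integralZl_EFin //; last 3 first.
- by move=> t _; rewrite lee_fin.
- by apply/measurable_EFinP; exact: mg.
- by rewrite mulr_ge0 // prodr_ge0 // => j _; apply: I0; apply: ltn_trans (ltn_ord j) _.
by rewrite gI // -EFinM big_ord_recr /=; congr (_%:E); ring.
Qed.

End gauss_iter.

Section sqr_normal_mgf_bounds.
Variable R : realType.
Implicit Types (u y l a v : R).

Lemma invsqrt_le_expR u y : 0 < u -> u^-1 <= expR (2 * y) -> (Num.sqrt u)^-1 <= expR y.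
Proof.
move=> u0; rewrite expRM_natl -(sqrtrV (ltW u0)) => h.
by rewrite -[expR y]ger0_norm ?expR_ge0 // -sqrtr_sqr ler_sqrt // sqr_ge0.
Qed.

Lemma invsqrt_1B_le_expR u : 0 <= u <= 1 / 2 -> (Num.sqrt (1 - u))^-1 <= expR u.
Proof.
move=> /andP[u0 u1]; apply: invsqrt_le_expR; first lra.
apply: le_trans (expR_ge1Dx _); rewrite -div1r ler_pdivrMr; nra.
Qed.

Lemma invsqrt_1D_le_expR u : 0 <= u ->
  (Num.sqrt (1 + u))^-1 <= expR (- u / 2 + u ^+ 2 / 2).
Proof.
move=> u0; apply: invsqrt_le_expR; first lra.
apply: le_trans (expR_ge1Dx _); rewrite -div1r ler_pdivrMr; last lra.
have : 0 <= u ^+ 3 by rewrite exprn_ge0.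
rewrite !expr2 !exprS expr0; nra.
Qed.

Lemma sqr_normal_mgf_le l a v : 0 <= l -> 0 <= 2 * l * v <= 1 / 2 ->
  sqr_normal_mgf l a v <= expR (2 * l * v + 2 * l * a ^+ 2).
Proof.
move=> l0 /andP[u0 u1]; rewrite /sqr_normal_mgf expRD.
apply: ler_pM; rewrite ?invr_ge0 ?sqrtr_ge0 ?expR_ge0 ?invsqrt_1B_le_expR ?u0 //.
rewrite ler_expR ler_pdivrMr; last lra.
have : 0 <= l * a ^+ 2 by rewrite mulr_ge0 ?sqr_ge0.
nra.
Qed.

Lemma sqr_normal_mgfN_le l a v : 0 <= l -> 0 <= v ->
  sqr_normal_mgf (- l) a v <=
  expR (- (l * v) + 2 * (l * v) ^+ 2 - l * a ^+ 2 + 2 * (l * v) * (l * a ^+ 2)).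
Proof.
move=> l0 v0; have lv0 : 0 <= l * v by rewrite mulr_ge0.
have la0 : 0 <= l * a ^+ 2 by rewrite mulr_ge0 ?sqr_ge0.
rewrite /sqr_normal_mgf -addrA expRD.
have -> : 1 - 2 * - l * v = 1 + 2 * (l * v) by ring.
apply: ler_pM; rewrite ?invr_ge0 ?sqrtr_ge0 ?expR_ge0 //.
  have := @invsqrt_1D_le_expR (2 * (l * v)); rewrite mulr_ge0 // => /(_ isT).
  by congr (_ <= expR _); field.
rewrite ler_expR ler_pdivrMr; last lra.
have : 0 <= l * a ^+ 2 * (l * v) ^+ 2 by rewrite mulr_ge0 ?sqr_ge0.
nra.
Qed.

Section tail_mgf_bounds.
Variables (m : nat) (M : R) (s v a : nat -> R).
Hypothesis s_bnd : forall j, (j < m)%N -> 0 <= s j <= M.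
Hypothesis v_bnd : forall j, (j < m)%N -> s j <= v j <= 2 * s j.

Let sum_le_mM : \sum_(j < m) s j <= m%:R * M.
Proof.
rewrite (_ : m%:R * M = \sum_(j < m) M); last by rewrite sumr_const card_ord mulr_natl.
by apply: ler_sum => j _; have /andP[_ ->] := s_bnd (ltn_ord j).
Qed.

Let sum_sqr_ge0 : 0 <= \sum_(j < m) a j ^+ 2.
Proof. by rewrite sumr_ge0 // => j _; rewrite sqr_ge0. Qed.

Lemma upper_tail_mgf_bound l : 0 < l -> l * M = 1 / 8 ->
  expR (- (l * (3 * \sum_(j < m) s j + 3 / 2 * m%:R * M + 4 * \sum_(j < m) a j ^+ 2))) *
  \prod_(j < m) sqr_normal_mgf l (a j) (v j) <= expR (- (m%:R / 16)).
Proof.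
move=> l0 lM.
have factor_le j : (j < m)%N ->
    0 <= sqr_normal_mgf l (a j) (v j) <= expR (4 * l * s j + 2 * l * a j ^+ 2).
  move=> jm; have /andP[s0 sM] := s_bnd jm; have /andP[sv v2] := v_bnd jm.
  rewrite /sqr_normal_mgf mulr_ge0 ?invr_ge0 ?sqrtr_ge0 ?expR_ge0 //=.
  apply: (le_trans (sqr_normal_mgf_le (a j) _ _)); first exact: ltW.
    by apply/andP; split; nra.
  by rewrite ler_expR lerD2r; nra.
apply: le_trans (ler_wpM2l (expR_ge0 _)
  (ler_prod _ (fun (j : 'I_m) _ => factor_le j (ltn_ord j)))) _.
rewrite -expR_sum -expRD ler_expR big_split /= -!mulr_sumr.
have lS : l * \sum_(j < m) s j <= l * (m%:R * M).
  by rewrite ler_pM2l //; exact: sum_le_mM.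
have lmM : l * (m%:R * M) = m%:R / 8 by rewrite mulrCA lM; lra.
have lr0 : 0 <= l * \sum_(j < m) a j ^+ 2 := mulr_ge0 (ltW l0) sum_sqr_ge0.
lra.
Qed.

Lemma lower_tail_mgf_bound (c l : R) : 0 < c -> 0 < l -> l * M = c / 4 ->
  expR (l * (\sum_(j < m) s j - 4 * c * (m%:R * M + \sum_(j < m) a j ^+ 2))) *
  \prod_(j < m) sqr_normal_mgf (- l) (a j) (v j) <= expR (- (c ^+ 2 * m%:R / 2)).
Proof.
move=> c0 l0 lM.
have factor_le j : (j < m)%N -> 0 <= sqr_normal_mgf (- l) (a j) (v j) <=
    expR (- (l * s j) + c ^+ 2 / 2 - (1 - c) * (l * a j ^+ 2)).
  move=> jm; have /andP[s0 sM] := s_bnd jm; have /andP[sv v2] := v_bnd jm.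
  rewrite /sqr_normal_mgf mulr_ge0 ?invr_ge0 ?sqrtr_ge0 ?expR_ge0 //=.
  apply: (le_trans (sqr_normal_mgfN_le (a j) (ltW l0) _)); first lra.
  rewrite ler_expR.
  have la0 : 0 <= l * a j ^+ 2 by rewrite mulr_ge0 ?sqr_ge0 ?ltW.
  have lvM : l * v j <= c / 2.
    have : l * v j <= l * (2 * M) by rewrite ler_pM2l //; lra.
    lra.
  have lsv : l * s j <= l * v j by rewrite ler_pM2l.
  have lv0 : 0 <= l * v j by nra.
  nra.
apply: le_trans (ler_wpM2l (expR_ge0 _)
  (ler_prod _ (fun (j : 'I_m) _ => factor_le j (ltn_ord j)))) _.
rewrite -expR_sum -expRD ler_expR !big_split /= !sumrN -!mulr_sumr sumr_const card_ord.
have clmM : c * (l * (m%:R * M)) = c ^+ 2 * m%:R / 4 by rewrite [l * _]mulrCA lM; ring.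
have lr0 : 0 <= l * \sum_(j < m) a j ^+ 2 := mulr_ge0 (ltW l0) sum_sqr_ge0.
have clr0 : 0 <= c * (l * \sum_(j < m) a j ^+ 2) := mulr_ge0 (ltW c0) lr0.
rewrite -mulr_natr; nra.
Qed.

End tail_mgf_bounds.
End sqr_normal_mgf_bounds.

Section sieve.
Variable R : realType.
Implicit Types (theta eta x : nat -> R).

Lemma bias_fin_num m theta eta :
  (\sum_(0 <= j <oo) ((theta j - eta j) ^+ 2)%:E < +oo)%E ->
  bias m theta eta \is a fin_num.
Proof.
move=> diff_l2; rewrite ge0_fin_numE; last first.
  by apply: nneseries_ge0 => n _ _; rewrite lee_fin sqr_ge0.
apply: le_lt_trans diff_l2.
rewrite (@nneseries_split _ _ 0 m) ?add0n; last by move=> k _; rewrite lee_fin sqr_ge0.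
by rewrite leeDr // sume_ge0 // => k _; rewrite lee_fin sqr_ge0.
Qed.

Lemma sqdist_sieve m theta eta x :
  sqdist (sieve m eta x) theta =
  ((\sum_(j < m) (x j - theta j) ^+ 2)%:E + bias m theta eta)%E.
Proof.
rewrite /sqdist (@nneseries_split _ _ 0 m) ?add0n; last by move=> k _; rewrite lee_fin sqr_ge0.
congr (_ + _)%E.
  by rewrite -sumEFin big_mkord; apply: eq_bigr => j _; rewrite /sieve ltn_ord.
apply/congr_lim/funext => n; apply: eq_big_nat => i /andP[mi _].
by rewrite /sieve ltnNge mi /= -sqrrN opprB.
Qed.

End sieve.

Section posterior.
Variable R : realType.
Variables (lam tau eta theta : nat -> R) (eps : R) (m : nat).
Hypotheses (lam_neq0 : forall j, lam j != 0) (eps_gt0 : 0 < eps)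
  (tau_gt0 : forall j, 0 < tau j).

Local Notation sigma := (post_var lam tau eps).

(* Under the data law, [theta^Y_j - theta_j = post_gain j * (Y_j - lam_j theta_j)
   + post_bias j] (see [post_mean_sub]), so a posterior draw has
   [vartheta_j - theta_j ~ N(post_bias j, marginal_var j)] marginally. *)
Definition post_gain j := sigma j * lam j / eps.

Definition post_bias j := sigma j / tau j * (eta j - theta j).

Definition marginal_var j := sigma j + post_gain j ^+ 2 * eps.

Lemma post_var_gt0 j : 0 < sigma j.
Proof.
by rewrite /post_var invr_gt0 ltr_wpDl ?invr_gt0 // divr_ge0 ?sqr_ge0 // ltW.
Qed.

Lemma post_varK j : sigma j * (lam j ^+ 2 / eps + (tau j)^-1) = 1.
Proof. by rewrite /post_var mulVf // gt_eqF // -invr_gt0 post_var_gt0. Qed.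

Lemma post_gain_neq0 j : post_gain j != 0.
Proof.
by rewrite !mulf_neq0 ?lam_neq0 ?(lt0r_neq0 (post_var_gt0 j)) // invr_eq0 lt0r_neq0.
Qed.

Lemma post_mean_sub Y j :
  post_mean lam tau eta eps Y j - theta j =
  post_gain j * (Y j - (lam j * theta j - post_bias j / post_gain j)).
Proof.
rewrite -[in LHS](mul1r (theta j)) -(post_varK j) /post_mean /post_gain /post_bias.
by field; rewrite lam_neq0 !lt0r_neq0 ?post_var_gt0.
Qed.

Lemma marginal_var_bnd j : sigma j <= marginal_var j <= 2 * sigma j.
Proof.
have s0 := post_var_gt0 j.
have e0 : 0 <= post_gain j ^+ 2 * eps by rewrite mulr_ge0 ?sqr_ge0 // ltW.
rewrite /marginal_var lerDl e0 /=.
have -> : post_gain j ^+ 2 * eps = sigma j * (1 - sigma j / tau j).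
  by rewrite -[1](post_varK j) /post_gain; field; rewrite !lt0r_neq0 ?tau_gt0.
have : 0 <= sigma j * (sigma j / tau j) by rewrite mulr_ge0 ?divr_ge0 ?ltW.
lra.
Qed.

Lemma r_mE : r_m m lam tau eta theta eps = \sum_(j < m) post_bias j ^+ 2.
Proof. by apply: eq_bigr => j _; rewrite /post_bias !exprMn (exprVn (tau j)). Qed.

Lemma posterior_mgf (l h0 : R) Y :
  (forall j, (j < m)%N -> 0 < 1 - 2 * l * sigma j) -> 0 <= h0 ->
  gauss_iter m (post_mean lam tau eta eps Y) (fun j => Num.sqrt (sigma j))
    (fun x => (h0 * \prod_(j < m) expR (l * (x j - theta j) ^+ 2))%:E) (fun _ => 0) =
  (h0 * \prod_(j < m)
         sqr_normal_mgf l (post_mean lam tau eta eps Y j - theta j) (sigma j))%:E.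
Proof.
move=> D0 h00.
apply: (@gauss_iter_prod R m _ _ (fun j t => expR (l * (t - theta j) ^+ 2))
  (fun j => sqr_normal_mgf l (post_mean lam tau eta eps Y j - theta j) (sigma j))
  (fun _ => h0)) => // [j|j jm]; first exact: measurable_expR_sqr.
have s0 := post_var_gt0 j.
by rewrite normal_mgf_sqr ?sqr_sqrtr ?D0 ?lt0r_neq0 ?sqrtr_gt0 ?ltW.
Qed.

Lemma exp_post_mgf (l h0 : R) :
  (forall j, (j < m)%N -> 0 < 1 - 2 * l * marginal_var j) -> 0 <= h0 ->
  gauss_iter m (fun j => lam j * theta j) (fun _ => Num.sqrt eps)
    (fun Y => gauss_iter m (post_mean lam tau eta eps Y) (fun j => Num.sqrt (sigma j))
       (fun x => (h0 * \prod_(j < m) expR (l * (x j - theta j) ^+ 2))%:E) (fun _ => 0))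
    (fun _ => 0) =
  (h0 * \prod_(j < m) sqr_normal_mgf l (post_bias j) (marginal_var j))%:E.
Proof.
move=> V0 h00.
have D0 j : (j < m)%N -> 0 < 1 - 2 * l * sigma j.
  move=> jm; have := V0 j jm; have /andP[sV _] := marginal_var_bnd j.
  have s0 := post_var_gt0 j; case: (lerP 0 l) => l0; nra.
pose D j := 1 - 2 * l * sigma j.
pose k j := l * post_gain j ^+ 2 / D j.
pose nu j := lam j * theta j - post_bias j / post_gain j.
have -> : (fun Y => gauss_iter m (post_mean lam tau eta eps Y) (fun j => Num.sqrt (sigma j))
       (fun x => (h0 * \prod_(j < m) expR (l * (x j - theta j) ^+ 2))%:E) (fun _ => 0)) =
    (fun Y => (h0 * \prod_(j < m) (Num.sqrt (D j))^-1 *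
               \prod_(j < m) expR (k j * (Y j - nu j) ^+ 2))%:E).
  apply/funext => Y; rewrite posterior_mgf // -mulrA -big_split /=.
  congr (_ * _)%:E; apply: eq_bigr => j _.
  by rewrite post_mean_sub sqr_normal_mgf_scale // lt0r_neq0 ?D0.
rewrite (@gauss_iter_prod R m _ _ (fun j t => expR (k j * (t - nu j) ^+ 2))
  (fun j => sqr_normal_mgf (k j) (post_bias j / post_gain j) eps)
  (fun _ => h0 * \prod_(j < m) (Num.sqrt (D j))^-1)) //; first last.
- by move=> _; rewrite mulr_ge0 // prodr_ge0 // => j _; rewrite invr_ge0 sqrtr_ge0.
- move=> j jm; rewrite normal_mgf_sqr ?sqr_sqrtr ?ltW ?lt0r_neq0 ?sqrtr_gt0 //.
    by rewrite /nu opprB addrC subrK.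
  exact: mix_factor_gt0 (D0 j jm) (V0 j jm).
- by move=> j; exact: measurable_expR_sqr.
rewrite -mulrA -big_split /=; congr (_ * _)%:E; apply: eq_bigr => j _.
exact: sqr_normal_mgf_mix (post_gain_neq0 j) (D0 j (ltn_ord j)) (V0 j (ltn_ord j)).
Qed.

Lemma post_var_bnd j : (j < m)%N -> 0 <= sigma j <= sigma_max m lam tau eps.
Proof.
move=> jm; rewrite ltW ?post_var_gt0 //=.
exact: (le_bigmax _ (fun i : 'I_m => sigma i) (Ordinal jm)).
Qed.

Lemma sigma_max_gt0 : (0 < m)%N -> 0 < sigma_max m lam tau eps.
Proof.
move=> m0; have /andP[_ sM] := post_var_bnd m0.
exact: lt_le_trans (post_var_gt0 0) sM.
Qed.

Lemma exp_post_prob_le_mgf (A : set (\bar R)) (l T : R) :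
  (forall j, (j < m)%N -> 0 < 1 - 2 * l * marginal_var j) ->
  (forall S : R, A (S%:E + bias m theta eta)%E -> l * T <= l * S) ->
  (exp_post_prob m lam tau eta theta eps A <=
   (expR (- (l * T)) * \prod_(j < m) sqr_normal_mgf l (post_bias j) (marginal_var j))%:E)%E.
Proof.
move=> V0 AT; rewrite -exp_post_mgf ?expR_ge0 //.
apply: le_gauss_iter => Y; first exact: gauss_iter_ge0.
apply: le_gauss_iter => x; first by rewrite lee_fin indicE ler0n.
rewrite sqdist_sieve lee_fin -expR_sum -expRD indicE.
case: (boolP (_ \in A)) => [/set_mem/AT lTS | _]; last exact: expR_ge0.
by rewrite -expR0 ler_expR -mulr_sumr addrC subr_ge0.
Qed.

Lemma exp_post_prob_upper_tail : (0 < m)%N -> bias m theta eta \is a fin_num ->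
  (exp_post_prob m lam tau eta theta eps
     [set d | (bias m theta eta +
               (3 * sigma_bar m lam tau eps
                + 3 / 2 * m%:R * sigma_max m lam tau eps
                + 4 * r_m m lam tau eta theta eps)%:E < d)%E]
   <= (expR (- (m%:R / 16)))%:E)%E.
Proof.
move=> m0 bfin; set M := sigma_max m lam tau eps.
set T := 3 * sigma_bar m lam tau eps + 3 / 2 * m%:R * M + 4 * r_m m lam tau eta theta eps.
have M0 : 0 < M := sigma_max_gt0 m0.
have l0 : 0 < (8 * M)^-1 by rewrite invr_gt0 mulr_gt0.
have lM : (8 * M)^-1 * M = 1 / 8 by field; exact: lt0r_neq0.
apply: le_trans (@exp_post_prob_le_mgf _ (8 * M)^-1 T _ _) _.
- move=> j jm; have /andP[_ sM] := post_var_bnd jm; rewrite -/M in sM.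
  have /andP[_ V2] := marginal_var_bnd j.
  have : (8 * M)^-1 * marginal_var j <= (8 * M)^-1 * (2 * M) by rewrite ler_pM2l //; lra.
  lra.
- move=> S; rewrite /= addeC lteD2rE // lte_fin => /ltW.
  by rewrite ler_pM2l.
rewrite lee_fin /T r_mE; apply: upper_tail_mgf_bound => //.
- exact: post_var_bnd.
- by move=> j _; exact: marginal_var_bnd.
Qed.

Lemma exp_post_prob_lower_tail (c : R) : 0 < c -> (0 < m)%N ->
  bias m theta eta \is a fin_num ->
  (exp_post_prob m lam tau eta theta eps
     [set d | (d < bias m theta eta +
               (sigma_bar m lam tau eps
                - 4 * c * (m%:R * sigma_max m lam tau eps
                           + r_m m lam tau eta theta eps))%:E)%E]
   <= (expR (- (c ^+ 2 * m%:R / 2)))%:E)%E.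
Proof.
move=> c0 m0 bfin; set M := sigma_max m lam tau eps.
set T := sigma_bar m lam tau eps - 4 * c * (m%:R * M + r_m m lam tau eta theta eps).
have M0 : 0 < M := sigma_max_gt0 m0.
have l0 : 0 < c / (4 * M) by rewrite divr_gt0 ?mulr_gt0.
have lM : c / (4 * M) * M = c / 4 by field; exact: lt0r_neq0.
apply: le_trans (@exp_post_prob_le_mgf _ (- (c / (4 * M))) T _ _) _.
- move=> j _; have /andP[sV _] := marginal_var_bnd j; have s0 := post_var_gt0 j.
  have : 0 <= c / (4 * M) * marginal_var j by rewrite mulr_ge0 ?ltW //; lra.
  lra.
- move=> S; rewrite /= addeC lteD2lE // lte_fin => /ltW.
  by rewrite !mulNr lerN2 ler_pM2l.
rewrite lee_fin mulNr opprK /T r_mE; apply: lower_tail_mgf_bound => //.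
- exact: post_var_bnd.
- by move=> j _; exact: marginal_var_bnd.
Qed.

End posterior.

Theorem mainTheorem2 (R : realType) (lam tau eta theta : nat -> R) (eps : R)
  (lam_bnd : exists M : R, forall j, `|lam j| <= M)
  (lam_neq0 : forall j, lam j != 0)
  (eps_gt0 : 0 < eps) (eps_lt1 : eps < 1)
  (theta_l2 : (\sum_(0 <= j <oo) ((theta j ^+ 2)%:E) < +oo)%E)
  (diff_l2 : (\sum_(0 <= j <oo) (((theta j - eta j) ^+ 2)%:E) < +oo)%E)
  (tau_gt0 : forall j, 0 < tau j) :
  forall m : nat, (0 < m)%N ->
  (exp_post_prob m lam tau eta theta eps
     [set d | (bias m theta eta +
               (3 * sigma_bar m lam tau eps
                + 3 / 2 * m%:R * sigma_max m lam tau eps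
                + 4 * r_m m lam tau eta theta eps)%:E < d)%E]
   <= (2 * expR (- (m%:R / 36)))%:E)%E
  /\
  forall c : R, 0 < c -> c < 1 / 5 ->
  (exp_post_prob m lam tau eta theta eps
     [set d | (d < bias m theta eta +
               (sigma_bar m lam tau eps
                - 4 * c * (m%:R * sigma_max m lam tau eps
                           + r_m m lam tau eta theta eps))%:E)%E]
   <= (2 * expR (- (c ^+ 2 * m%:R / 2)))%:E)%E.
Proof.
move=> m m0; have bfin := bias_fin_num m diff_l2.
split=> [|c c0 _].
  apply: le_trans (@exp_post_prob_upper_tail R lam tau eta theta eps m
    lam_neq0 eps_gt0 tau_gt0 m0 bfin) _.
  have exp_le : expR (- (m%:R / 16)) <= expR (- (m%:R / 36)) :> R.
    by rewrite ler_expR lerN2; have := ler0n R m; lra.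
  by rewrite lee_fin; have := @expR_ge0 R (- (m%:R / 36)); lra.
apply: le_trans (@exp_post_prob_lower_tail R lam tau eta theta eps m
  lam_neq0 eps_gt0 tau_gt0 c c0 m0 bfin) _.
by rewrite lee_fin; have := @expR_ge0 R (- (c ^+ 2 * m%:R / 2)); lra.
Qed.
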